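(* Consider the RIS-assisted localization model described in the context, with fixed known AoDs $(\theta_i,\phi_i)$, propagation gains $h_i\in\mathbb{C}$, RIS phase shifts $\varrho_i\in[0,2\pi]$, pilot vectors $\boldsymbol{x}(1),\dots,\boldsymbol{x}(L)\in\mathbb{C}^{N_{\mathrm{t}}}$ and noise variance $\sigma^2>0$, and let $\mathbf{J}_{\boldsymbol{q}}=\mathbf{T}\mathbf{J}_{\boldsymbol{\eta}}\mathbf{T}^{\mathrm{T}}\in\mathbb{R}^{2\times 2}$ be the Fisher information matrix of the MS position $\boldsymbol{q}_{1:2}=[q_x,q_y]^{\mathrm{T}}$ (assumed nonsingular). Then for $a,b\in\{1,2\}$, $$[\mathbf{J}_{\boldsymbol{q}}]_{a,b}=\sum_{l=1}^{L}\frac{2}{\sigma^2}\sum_{m=1}^{N}\sum_{n=1}^{N}\mathfrak{Re}\Big[e^{j(\varrho_n-\varrho_m)}\kappa^{a,b}_{m,n}(l)\Big],$$ where, writing $u^1=x$, $u^2=y$, $$\kappa^{a,b}_{m,n}(l)=\alpha_m^{u^a}\alpha_n^{u^b}\dot{\boldsymbol{\varpi}}_m^{\mathrm{H}}(l)\dot{\boldsymbol{\varpi}}_n(l)+\beta_m^{u^a}\alpha_n^{u^b}\ddot{\boldsymbol{\varpi}}_m^{\mathrm{H}}(l)\dot{\boldsymbol{\varpi}}_n(l)+\alpha_m^{u^a}\beta_n^{u^b}\dot{\boldsymbol{\varpi}}_m^{\mathrm{H}}(l)\ddot{\boldsymbol{\varpi}}_n(l)+\beta_m^{u^a}\beta_n^{u^b}\ddot{\boldsymbol{\varpi}}_m^{\mathrm{H}}(l)\ddot{\boldsymbol{\varpi}}_n(l),$$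 and consequently the Cramér–Rao lower bound for the estimate of the absolute MS position is $$\mathrm{CRLB}=\mathrm{Tr}\big(\mathbf{J}_{\boldsymbol{q}}^{-1}\big)=\frac{[\mathbf{J}_{\boldsymbol{q}}]_{1,1}+[\mathbf{J}_{\boldsymbol{q}}]_{2,2}}{[\mathbf{J}_{\boldsymbol{q}}]_{1,1}[\mathbf{J}_{\boldsymbol{q}}]_{2,2}-[\mathbf{J}_{\boldsymbol{q}}]_{1,2}[\mathbf{J}_{\boldsymbol{q}}]_{2,1}}.$$
   Context: Setting: a base station (BS) with $N_{\mathrm{t}}$ antennas at known position $\boldsymbol{p}=[p_x,p_y,0]^{\mathrm{T}}$, a mobile station (MS) with $N_{\mathrm{r}}$ antennas at unknown position $\boldsymbol{q}=[q_x,q_y,0]^{\mathrm{T}}$, and a reconfigurable intelligent surface (RIS) with $N$ reflecting elements at known positions $\boldsymbol{s}^i=[s^i_x,s^i_y,s^i_z]^{\mathrm{T}}$, $s^i_z>0$, $i=1,\dots,N$; the line of sight is blocked, so there are exactly $N$ paths, path $i$ going through element $i$. Path $i$ has known elevation/azimuth angle-of-departure $\theta_i,\phi_i$ and elevation/azimuth angle-of-arrival $\vartheta_i,\varphi_i$, which are functions of $\boldsymbol{q}_{1:2}$ given by $\vartheta_i=\arctan\big(\|\boldsymbol{q}_{1:2}-\boldsymbol{s}^i_{1:2}\|_2/s^i_z\big)$ and $\varphi_i=\arccos\big(-|q_x-s^i_x|/\|\boldsymbol{q}_{1:2}-\boldsymbol{s}^i_{1:2}\|_2\big)$ (assumed differentiable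 at the true $\boldsymbol{q}_{1:2}$). Let $k=2\pi d/\lambda$ ($d$ antenna spacing, $\lambda$ wavelength), $\xi_i=k\sin\vartheta_i\sin\varphi_i$, $\zeta_i=k\sin\theta_i\sin\phi_i$, $\mathbf{a}_{\mathrm{t}}(\theta_i,\phi_i)=[e^{j(n-1)\zeta_i}]_{n=1}^{N_{\mathrm{t}}}$, $\mathbf{a}_{\mathrm{r}}(\vartheta_i,\varphi_i)=[e^{j(m-1)\xi_i}]_{m=1}^{N_{\mathrm{r}}}$, $\mathbf{\Lambda}_{\mathrm{t}}=[\mathbf{a}_{\mathrm{t}}(\theta_1,\phi_1),\dots,\mathbf{a}_{\mathrm{t}}(\theta_N,\phi_N)]$, $\mathbf{\Lambda}_{\mathrm{r}}=[\mathbf{a}_{\mathrm{r}}(\vartheta_1,\varphi_1),\dots,\mathbf{a}_{\mathrm{r}}(\vartheta_N,\varphi_N)]$. The channel is $\tilde{\mathbf{H}}=\mathbf{\Lambda}_{\mathrm{r}}\,\mathrm{diag}(h_1,\dots,h_N)\,\mathrm{diag}(e^{j\varrho_1},\dots,e^{j\varrho_N})\,\mathbf{\Lambda}_{\mathrm{t}}^{\mathrm{H}}$. In time slot $l=1,\dots,L$ the MS receives $\boldsymbol{y}(l)=\tilde{\mathbf{H}}\boldsymbol{x}(l)+\boldsymbol{n}$ with noise entries i.i.d. $\mathcal{CN}(0,\sigma^2)$; write $\boldsymbol{\mu}(l)=\tilde{\mathbf{H}}\boldsymbol{x}(l)$. The unknown parameter vector is $\boldsymbol{\eta}=[\vartheta_1,\dots,\vartheta_N,\varphi_1,\dots,\varphi_N,h_1,\dots,h_N]^{\mathrm{T}}$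 and its Fisher information matrix is $[\mathbf{J}_{\boldsymbol{\eta}}]_{m,n}=\sum_{l=1}^{L}\frac{2}{\sigma^2}\mathfrak{Re}\big\{\frac{\partial\boldsymbol{\mu}^{\mathrm{H}}(l)}{\partial\eta_m}\frac{\partial\boldsymbol{\mu}(l)}{\partial\eta_n}\big\}$. The transformation matrix is $\mathbf{T}=\partial\boldsymbol{\eta}^{\mathrm{T}}/\partial\boldsymbol{q}_{1:2}\in\mathbb{R}^{2\times 3N}$, where the gains $h_i$ do not depend on $\boldsymbol{q}$ (so $\partial h_i/\partial\boldsymbol{q}_{1:2}=0$). Notation: $\alpha_i^x=\partial\vartheta_i/\partial q_x$, $\alpha_i^y=\partial\vartheta_i/\partial q_y$, $\beta_i^x=\partial\varphi_i/\partial q_x$, $\beta_i^y=\partial\varphi_i/\partial q_y$. Define $N_{\mathrm{r}}\times N_{\mathrm{t}}$ matrices $[\dot{\boldsymbol{\Xi}}_i]_{m,n}=h_i\,j(m-1)k\sin\varphi_i\cos\vartheta_i\,e^{j[(m-1)\xi_i+(1-n)\zeta_i]}$ and $[\ddot{\boldsymbol{\Xi}}_i]_{m,n}=h_i\,j(m-1)k\sin\vartheta_i\cos\varphi_i\,e^{j[(m-1)\xi_i+(1-n)\zeta_i]}$, and vectors $\dot{\boldsymbol{\varpi}}_i(l)=\dot{\boldsymbol{\Xi}}_i\boldsymbol{x}(l)$, $\ddot{\boldsymbol{\varpi}}_i(l)=\ddot{\boldsymbol{\Xi}}_i\boldsymbol{x}(l)$. The CRLB for the MS position estimate is defined as $\mathrm{Tr}(\mathbf{J}_{\boldsymbol{q}}^{-1})$.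 *)

(* All indices are 0-based: path i ranges over 0..N-1, receive antenna m over
   0..Nr-1, transmit antenna n over 0..Nt-1, time slot l over 0..L-1;
   the paper's (m-1), (n-1), l=1..L become m, n, l=0..L-1. *)
From Stdlib Require Import Reals.
From Coquelicot Require Import Coquelicot.
From mathcomp Require Import all_boot all_algebra.
From mathcomp Require Import Rstruct.

Open Scope R_scope.

Fixpoint csum (n : nat) (f : nat -> C) : C :=
  match n with O => RtoC 0 | S n' => Cplus (csum n' f) (f n') end.
Fixpoint rsum (n : nat) (f : nat -> R) : R :=
  match n with O => 0 | S n' => rsum n' f + f n' end.

Definition cis (t : R) : C := (cos t, sin t).
Definition jC : C := (0, 1).

Definition kwave (d lam : R) : R := 2 * PI * d / lam.

Definition dist2 (sx sy : R) (qx qy : R) : R :=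
  sqrt ((qx - sx) ^ 2 + (qy - sy) ^ 2).
Definition vartheta_q (sx sy sz : R) (qx qy : R) : R :=
  atan (dist2 sx sy qx qy / sz).
Definition varphi_q (sx sy : R) (qx qy : R) : R :=
  acos (- Rabs (qx - sx) / dist2 sx sy qx qy).

Definition upd {A : Type} (f : nat -> A) (p : nat) (v : A) : nat -> A :=
  fun i => if Nat.eqb i p then v else f i.

(* noiseless received signal  mu(l) = H~ x(l), m-th entry, as a function of
   the AoAs vth, vph, and gains h (AoDs th, ph, phases rho, pilots x fixed):
   mu_m = sum_i e^{j m xi_i} h_i e^{j rho_i} sum_n conj(e^{j n zeta_i}) x_n *)
Definition mu (k : R) (N Nt : nat) (th ph rho : nat -> R) (x : nat -> nat -> C)
  (vth vph : nat -> R) (h : nat -> C) (l m : nat) : C :=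
  csum N (fun i =>
    Cmult (Cmult (Cmult (cis (INR m * (k * sin (vth i) * sin (vph i)))) (h i))
                 (cis (rho i)))
          (csum Nt (fun n =>
             Cmult (Cconj (cis (INR n * (k * sin (th i) * sin (ph i))))) (x l n)))).

(* D l p m is the derivative of the m-th entry of mu(l) w.r.t. eta_p, where
   eta = [vth_0..vth_{N-1}, vph_0..vph_{N-1}, h_0..h_{N-1}], evaluated at the
   true parameters (vth, vph, h). *)
Definition is_mu_derivative (k : R) (N Nt Nr L : nat) (th ph rho : nat -> R)
  (x : nat -> nat -> C) (vth vph : nat -> R) (h : nat -> C)
  (D : nat -> nat -> nat -> C) : Prop :=
  forall l m, (l < L)%nat -> (m < Nr)%nat ->
    (forall p, (p < N)%nat ->
       @is_derive R_AbsRing C_R_NormedModule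
         (fun t => mu k N Nt th ph rho x (upd vth p t) vph h l m) (vth p) (D l p m)) /\
    (forall p, (p < N)%nat ->
       @is_derive R_AbsRing C_R_NormedModule
         (fun t => mu k N Nt th ph rho x vth (upd vph p t) h l m) (vph p)
         (D l (N + p)%nat m)) /\
    (forall p, (p < N)%nat ->
       @is_derive C_AbsRing C_NormedModule
         (fun z => mu k N Nt th ph rho x vth vph (upd h p z) l m) (h p)
         (D l (2 * N + p)%nat m)).

Definition J_eta (Nr L : nat) (sigma2 : R) (D : nat -> nat -> nat -> C)
  (p p' : nat) : R :=
  rsum L (fun l => 2 / sigma2 *
    Re (csum Nr (fun m => Cmult (Cconj (D l p m)) (D l p' m)))).

(* transformation matrix T = d eta^T / d q_{1:2}  (2 x 3N), row a = 0 for q_x,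
   a = 1 for q_y; al a i = d vartheta_i / d u^a, be a i = d varphi_i / d u^a;
   the gain columns are zero. *)
Definition Tmat (N : nat) (al be : nat -> nat -> R) (a p : nat) : R :=
  if (p <? N)%nat then al a p
  else if (p <? 2 * N)%nat then be a (p - N)%nat
  else 0.

Definition J_q_entry (N Nr L : nat) (sigma2 : R) (D : nat -> nat -> nat -> C)
  (al be : nat -> nat -> R) (a b : nat) : R :=
  rsum (3 * N) (fun p => rsum (3 * N) (fun p' =>
    Tmat N al be a p * J_eta Nr L sigma2 D p p' * Tmat N al be b p')).

Definition J_q (N Nr L : nat) (sigma2 : R) (D : nat -> nat -> nat -> C)
  (al be : nat -> nat -> R) : 'M[R]_2 :=
  \matrix_(a < 2, b < 2) J_q_entry N Nr L sigma2 D al be a b.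

(* [dotXi_i]_{m,n} and [ddotXi_i]_{m,n}, with (m-1) -> m, (1-n) -> -n *)
Definition dXi (k : R) (th ph vth vph : nat -> R) (h : nat -> C) (i m n : nat) : C :=
  Cmult (Cmult (h i) (Cmult jC (RtoC (INR m * k * sin (vph i) * cos (vth i)))))
        (cis (INR m * (k * sin (vth i) * sin (vph i))
              - INR n * (k * sin (th i) * sin (ph i)))).
Definition ddXi (k : R) (th ph vth vph : nat -> R) (h : nat -> C) (i m n : nat) : C :=
  Cmult (Cmult (h i) (Cmult jC (RtoC (INR m * k * sin (vth i) * cos (vph i)))))
        (cis (INR m * (k * sin (vth i) * sin (vph i))
              - INR n * (k * sin (th i) * sin (ph i)))).

Definition matvec (Nt : nat) (A : nat -> nat -> C) (x : nat -> C) (m : nat) : C :=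
  csum Nt (fun n => Cmult (A m n) (x n)).

Definition hdot (Nr : nat) (u v : nat -> C) : C :=
  csum Nr (fun r => Cmult (Cconj (u r)) (v r)).

Definition kappa (k : R) (Nt Nr : nat) (th ph vth vph : nat -> R) (h : nat -> C)
  (x : nat -> nat -> C) (al be : nat -> nat -> R) (a b m n l : nat) : C :=
  let dw := fun i => matvec Nt (dXi k th ph vth vph h i) (x l) in
  let ddw := fun i => matvec Nt (ddXi k th ph vth vph h i) (x l) in
  Cplus (Cplus (Cplus
    (Cmult (RtoC (al a m * al b n)) (hdot Nr (dw m) (dw n)))
    (Cmult (RtoC (be a m * al b n)) (hdot Nr (ddw m) (dw n))))
    (Cmult (RtoC (al a m * be b n)) (hdot Nr (dw m) (ddw n))))
    (Cmult (RtoC (be a m * be b n)) (hdot Nr (ddw m) (ddw n))).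

(* Only the angle coordinates of eta depend on the position, so T J_eta T^T
   only involves the 2N x 2N angle block of J_eta.  Each coordinate vartheta_i
   or varphi_i enters mu only through the receive phase of path i, whence
   d mu / d vartheta_i = e^{j rho_i} varpi_dot_i and
   d mu / d varphi_i = e^{j rho_i} varpi_ddot_i.  Every angle entry of J_eta is
   therefore sum_l 2/sigma^2 Re(e^{j (rho_n - rho_m)} varpi_m^H varpi_n), and
   weighting the four blocks by the rows (alpha, beta) of T gives kappa.  The
   CRLB is the trace of the adjugate of a 2 x 2 matrix over its determinant. *)

From Stdlib Require Import Reals.
From Coquelicot Require Import Coquelicot.
From mathcomp Require Import all_boot all_algebra.
From mathcomp Require Import Rstruct zify.
Open Scope R_scope.

Notation is_deriveRC f x l := (@is_derive R_AbsRing C_R_NormedModule f x l).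

Lemma is_deriveRC_split (f : R -> C) x l :
  is_deriveRC f x l <->
  is_derive (fun t => (f t).1) x l.1 /\ is_derive (fun t => (f t).2) x l.2.
Proof.
split=> [Hf | [H1 H2]].
- split.
  + exact: (filterdiff_comp' f (fst : C_R_NormedModule -> R) _ _ _ Hf
              (filterdiff_linear _ is_linear_fst)).
  + exact: (filterdiff_comp' f (snd : C_R_NormedModule -> R) _ _ _ Hf
              (filterdiff_linear _ is_linear_snd)).
- have E t : f t = plus (scal (f t).1 (RtoC 1)) (scal (f t).2 (0, 1)).
    by case: (f t) => a b; apply: injective_projections;
       rewrite /= /plus /scal /= /mult /=; ring.
  apply: (is_derive_ext _ _ _ _ (fun t => esym (E t))).
  have -> : l = plus (scal l.1 (RtoC 1)) (scal l.2 (0, 1)).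
    by case: l {H1 H2} => a b; apply: injective_projections;
       rewrite /= /plus /scal /= /mult /=; ring.
  exact: is_derive_plus (is_derive_scal_l _ _ _ _ H1) (is_derive_scal_l _ _ _ _ H2).
Qed.

Lemma is_deriveRC_unique (f : R -> C) x l l' :
  is_deriveRC f x l -> is_deriveRC f x l' -> l = l'.
Proof.
move=> /is_deriveRC_split [H1 H2] /is_deriveRC_split [H1' H2'].
apply: injective_projections.
- by rewrite -(is_derive_unique _ _ _ H1) (is_derive_unique _ _ _ H1').
- by rewrite -(is_derive_unique _ _ _ H2) (is_derive_unique _ _ _ H2').
Qed.

Lemma is_deriveRC_cis_mult (psi : R -> R) (K : C) x psi' :
  is_derive psi x psi' ->
  is_deriveRC (fun t => Cmult (cis (psi t)) K) x
    (Cmult (Cmult (Cmult jC (RtoC psi')) (cis (psi x))) K).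
Proof.
move=> Hpsi; apply/is_deriveRC_split; rewrite /cis /jC /RtoC /=.
have Dpsi : ex_derive psi x by exists psi'.
split; auto_derive; rewrite ?(is_derive_unique _ _ _ Hpsi) //; ring.
Qed.

Lemma csum_ext n (f g : nat -> C) :
  (forall i, (i < n)%N -> f i = g i) -> csum n f = csum n g.
Proof. by elim: n => //= n IH E; rewrite IH ?E // => i Hi; apply: E; lia. Qed.

Lemma Cmult_csum_l n (c : C) (f : nat -> C) :
  Cmult c (csum n f) = csum n (fun i => Cmult c (f i)).
Proof.
elim: n => [|n IH] /=; last by rewrite -IH; ring.
by apply: injective_projections => /=; ring.
Qed.

Lemma is_deriveRC_csum_upd n p (G : nat -> R -> C) (v : nat -> R) l :
  (p < n)%N -> is_deriveRC (G p) (v p) l ->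
  is_deriveRC (fun t => csum n (fun i => G i (upd v p t i))) (v p) l.
Proof.
move=> + Hp; elim: n => [|n IH] //= Hpn.
have [Hlt | Heq] : (p < n)%N \/ p = n by lia.
- rewrite -[l]plus_zero_r; apply: is_derive_plus; first exact: IH.
  apply: (@is_derive_ext R_AbsRing C_R_NormedModule (fun _ => G n (v n)));
    last exact: is_derive_const.
  by move=> t; rewrite /upd; case: Nat.eqb_spec => //; lia.
- subst p; rewrite -[l]plus_zero_l; apply: is_derive_plus; last first.
    apply: (@is_derive_ext R_AbsRing C_R_NormedModule (G n)) => // t.
    by rewrite /upd Nat.eqb_refl.
  apply: (@is_derive_ext R_AbsRing C_R_NormedModule
            (fun _ => csum n (fun i => G i (v i)))); last exact: is_derive_const.
  move=> t; apply: csum_ext => i Hi.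
  by rewrite /upd; case: Nat.eqb_spec => //; lia.
Qed.

Lemma rsum_ext n (f g : nat -> R) :
  (forall i, (i < n)%N -> f i = g i) -> rsum n f = rsum n g.
Proof. by elim: n => //= n IH E; rewrite IH ?E // => i Hi; apply: E; lia. Qed.

Lemma rsum_eq0 n (f : nat -> R) : (forall i, (i < n)%N -> f i = 0) -> rsum n f = 0.
Proof. by move=> /rsum_ext ->; elim: n => //= n ->; ring. Qed.

Lemma rsum_plus n (f g : nat -> R) : rsum n (fun i => f i + g i) = rsum n f + rsum n g.
Proof. by elim: n => /= [|n ->]; ring. Qed.

Lemma Rmult_rsum_l n (c : R) (f : nat -> R) : c * rsum n f = rsum n (fun i => c * f i).
Proof. by elim: n => /= [|n <-]; ring. Qed.

Lemma rsum_add m n (f : nat -> R) :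
  rsum (m + n) f = rsum m f + rsum n (fun i => f (m + i)%N).
Proof. by elim: n => [|n IH]; rewrite ?addn0 ?addnS /= ?IH; ring. Qed.

Lemma rsum_swap m n (f : nat -> nat -> R) :
  rsum m (fun i => rsum n (fun j => f i j)) = rsum n (fun j => rsum m (fun i => f i j)).
Proof. by elim: m => /= [|m ->]; rewrite ?rsum_plus // rsum_eq0. Qed.

Lemma Tmat_vartheta N al be a p : (p < N)%N -> Tmat N al be a p = al a p.
Proof. by rewrite /Tmat; case: Nat.ltb_spec => //; lia. Qed.

Lemma Tmat_varphi N al be a p : (p < N)%N -> Tmat N al be a (N + p) = be a p.
Proof.
move=> Hp; rewrite /Tmat.
case: (Nat.ltb_spec (N + p) N) => [|_]; first lia.
case: (Nat.ltb_spec (N + p) (2 * N)) => [_|]; last lia.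
by rewrite addKn.
Qed.

Lemma Tmat_gain N al be a p : Tmat N al be a (2 * N + p) = 0.
Proof.
rewrite /Tmat; case: (Nat.ltb_spec (2 * N + p) N) => [|_]; first lia.
by case: (Nat.ltb_spec (2 * N + p) (2 * N)) => //; lia.
Qed.

Lemma rsum_Tmat N al be a (f : nat -> R) :
  rsum (3 * N) (fun p => Tmat N al be a p * f p) =
  rsum N (fun i => al a i * f i + be a i * f (N + i)%N).
Proof.
have -> : (3 * N = N + N + N)%N by lia.
rewrite !rsum_add rsum_plus [X in _ + _ + X]rsum_eq0 => [|i _].
  rewrite Rplus_0_r; congr (_ + _); apply: rsum_ext => i Hi.
  - by rewrite Tmat_vartheta.
  - by rewrite Tmat_varphi.
by rewrite addnn -mul2n Tmat_gain Rmult_0_l.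
Qed.

Lemma rsum_Tmat_bilinear N al be a b (J : nat -> nat -> R) :
  rsum (3 * N) (fun p => rsum (3 * N) (fun p' =>
    Tmat N al be a p * J p p' * Tmat N al be b p')) =
  rsum N (fun i => rsum N (fun j =>
      al a i * al b j * J i j + be a i * al b j * J (N + i)%N j
    + al a i * be b j * J i (N + j)%N + be a i * be b j * J (N + i)%N (N + j)%N)).
Proof.
under rsum_ext => p _.
  rewrite (rsum_ext _ _ (fun p' => Tmat N al be a p * (Tmat N al be b p' * J p p'))).
  rewrite -Rmult_rsum_l rsum_Tmat. over.
  by move=> p' _; ring.
rewrite rsum_Tmat; apply: rsum_ext => i _.
rewrite !Rmult_rsum_l -rsum_plus; apply: rsum_ext => j _; ring.
Qed.

Lemma Cconj_cis_mult a b (u v : C) :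
  Cmult (Cconj (Cmult (cis a) u)) (Cmult (cis b) v) =
  Cmult (cis (b - a)) (Cmult (Cconj u) v).
Proof.
rewrite /cis cos_minus sin_minus; case: u => u1 u2; case: v => v1 v2.
by apply: injective_projections => /=; ring.
Qed.

Lemma J_eta_phase {Nr L sigma2 D P P' ra rb} {U V : nat -> nat -> C} :
  (forall l m, (l < L)%N -> (m < Nr)%N -> D l P m = Cmult (cis ra) (U l m)) ->
  (forall l m, (l < L)%N -> (m < Nr)%N -> D l P' m = Cmult (cis rb) (V l m)) ->
  J_eta Nr L sigma2 D P P' =
  rsum L (fun l => 2 / sigma2 * Re (Cmult (cis (rb - ra)) (hdot Nr (U l) (V l)))).
Proof.
move=> HU HV; apply: rsum_ext => l Hl.
rewrite /hdot Cmult_csum_l; congr (_ * Re _); apply: csum_ext => m Hm.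
by rewrite HU // HV // Cconj_cis_mult.
Qed.

Lemma matvec_rank_one Nt (c : nat -> C) (alpha : nat -> R) zeta y m :
  matvec Nt (fun m n => Cmult (c m) (cis (alpha m - INR n * zeta))) y m =
  Cmult (Cmult (c m) (cis (alpha m)))
        (csum Nt (fun n => Cmult (Cconj (cis (INR n * zeta))) (y n))).
Proof.
rewrite Cmult_csum_l; apply: csum_ext => n _.
rewrite /cis cos_minus sin_minus.
by apply: injective_projections => /=; ring.
Qed.

Section TraceInverse2.
Import GRing.Theory.

Lemma mxtrace_invmx2 (A : 'M[R]_2) : A \in unitmx ->
  (\tr (invmx A))%R =
  (A ord0 ord0 + A ord_max ord_max) /
  (A ord0 ord0 * A ord_max ord_max - A ord0 ord_max * A ord_max ord0).
Proof.
move=> HA; rewrite /invmx HA mxtraceZ.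
rewrite (expand_det_row _ ord0) /mxtrace !big_ord_recr !big_ord0 /= !mxE.
rewrite /cofactor !det_mx11 !mxE /=.
have -> : widen_ord (m:=2) (leqnSn 1) ord_max = ord0 by apply/val_inj.
have -> : lift ord0 (@ord0 0) = ord_max :> 'I_2 by apply/val_inj.
have -> : lift ord_max (@ord0 0) = ord0 :> 'I_2 by apply/val_inj.
rewrite !RealsE /= mulrC; congr (_ * _^-1)%R.
  by rewrite !add0r expr0 mul1r -signr_odd /= expr0 mul1r addrC.
by rewrite !add0r expr0 mul1r expr1 mulN1r mulrN.
Qed.

End TraceInverse2.

Section RISSignal.

Variables (k : R) (N Nt Nr L : nat) (th ph rho vth vph : nat -> R).
Variables (h : nat -> C) (x : nat -> nat -> C).

(* [tx_beam i l] is a_t(theta_i, phi_i)^H x(l). *)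
Definition tx_beam (i l : nat) : C :=
  csum Nt (fun n => Cmult (Cconj (cis (INR n * (k * sin (th i) * sin (ph i))))) (x l n)).

Definition varpi_dot (i l : nat) : nat -> C := matvec Nt (dXi k th ph vth vph h i) (x l).
Definition varpi_ddot (i l : nat) : nat -> C := matvec Nt (ddXi k th ph vth vph h i) (x l).

Lemma is_deriveRC_path_sum (psi : nat -> R -> R) (v : nat -> R) psi' p l :
  (p < N)%N -> is_derive (psi p) (v p) psi' ->
  is_deriveRC
    (fun t => csum N (fun i =>
       Cmult (Cmult (Cmult (cis (psi i (upd v p t i))) (h i)) (cis (rho i))) (tx_beam i l)))
    (v p)
    (Cmult (cis (rho p))
       (Cmult (Cmult (Cmult (h p) (Cmult jC (RtoC psi'))) (cis (psi p (v p)))) (tx_beam p l))).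
Proof.
move=> Hp Hpsi; apply: (is_deriveRC_csum_upd _ _
  (fun i s => Cmult (Cmult (Cmult (cis (psi i s)) (h i)) (cis (rho i))) (tx_beam i l))) => //.
set K := Cmult (Cmult (h p) (cis (rho p))) (tx_beam p l).
have E s : Cmult (cis (psi p s)) K =
    Cmult (Cmult (Cmult (cis (psi p s)) (h p)) (cis (rho p))) (tx_beam p l).
  by rewrite /K; ring.
apply: (@is_derive_ext R_AbsRing C_R_NormedModule _ _ _ _ E).
have -> : Cmult (cis (rho p)) (Cmult (Cmult (Cmult (h p) (Cmult jC (RtoC psi')))
            (cis (psi p (v p)))) (tx_beam p l))
        = Cmult (Cmult (Cmult jC (RtoC psi')) (cis (psi p (v p)))) K by rewrite /K; ring.
exact: is_deriveRC_cis_mult.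
Qed.

Lemma mu_derive_vartheta l m p : (p < N)%N ->
  is_deriveRC (fun t => mu k N Nt th ph rho x (upd vth p t) vph h l m) (vth p)
    (Cmult (cis (rho p)) (varpi_dot p l m)).
Proof.
move=> Hp; rewrite /varpi_dot /dXi matvec_rank_one.
apply: (is_deriveRC_path_sum (fun i s => INR m * (k * sin s * sin (vph i)))) => //.
by auto_derive => //; ring.
Qed.

Lemma mu_derive_varphi l m p : (p < N)%N ->
  is_deriveRC (fun t => mu k N Nt th ph rho x vth (upd vph p t) h l m) (vph p)
    (Cmult (cis (rho p)) (varpi_ddot p l m)).
Proof.
move=> Hp; rewrite /varpi_ddot /ddXi matvec_rank_one.
apply: (is_deriveRC_path_sum (fun i s => INR m * (k * sin (vth i) * sin s))) => //.
by auto_derive => //; ring.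
Qed.

Variables (sigma2 : R) (D : nat -> nat -> nat -> C).
Hypothesis HD : is_mu_derivative k N Nt Nr L th ph rho x vth vph h D.

Lemma D_vartheta p : (p < N)%N -> forall l m, (l < L)%N -> (m < Nr)%N ->
  D l p m = Cmult (cis (rho p)) (varpi_dot p l m).
Proof.
move=> Hp l m Hl Hm; have [Hth _] := HD l m Hl Hm.
exact: is_deriveRC_unique _ _ _ _ (Hth p Hp) (mu_derive_vartheta l m p Hp).
Qed.

Lemma D_varphi p : (p < N)%N -> forall l m, (l < L)%N -> (m < Nr)%N ->
  D l (N + p)%N m = Cmult (cis (rho p)) (varpi_ddot p l m).
Proof.
move=> Hp l m Hl Hm; have [_ [Hph _]] := HD l m Hl Hm.
exact: is_deriveRC_unique _ _ _ _ (Hph p Hp) (mu_derive_varphi l m p Hp).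
Qed.

Lemma J_q_entry_kappa al be a b :
  J_q_entry N Nr L sigma2 D al be a b =
  rsum L (fun l => 2 / sigma2 * rsum N (fun m => rsum N (fun n =>
    Re (Cmult (cis (rho n - rho m)) (kappa k Nt Nr th ph vth vph h x al be a b m n l))))).
Proof.
rewrite /J_q_entry rsum_Tmat_bilinear.
under [RHS]rsum_ext => l _.
  rewrite Rmult_rsum_l; under rsum_ext => m _ do rewrite Rmult_rsum_l.
  over.
rewrite [RHS]rsum_swap; apply: rsum_ext => i Hi.
rewrite [RHS]rsum_swap; apply: rsum_ext => j Hj.
rewrite (J_eta_phase (D_vartheta i Hi) (D_vartheta j Hj)).
rewrite (J_eta_phase (D_varphi i Hi) (D_vartheta j Hj)).
rewrite (J_eta_phase (D_vartheta i Hi) (D_varphi j Hj)).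
rewrite (J_eta_phase (D_varphi i Hi) (D_varphi j Hj)).
rewrite !Rmult_rsum_l -!rsum_plus; apply: rsum_ext => l _.
by rewrite /kappa /varpi_dot /varpi_ddot /=; ring.
Qed.

End RISSignal.

Theorem mainTheorem1
  (N Nt Nr L : nat) (d lam : R) (th ph : nat -> R)
  (sx sy sz : nat -> R) (qx qy : R)
  (h : nat -> C) (rho : nat -> R) (x : nat -> nat -> C) (sigma2 : R)
  (D : nat -> nat -> nat -> C) (al be : nat -> nat -> R) :
  0 < d -> 0 < lam -> 0 < sigma2 ->
  (forall i, (i < N)%nat -> 0 < sz i) ->
  (forall i, (i < N)%nat -> 0 <= rho i <= 2 * PI) ->
  (* al a i = d vartheta_i / d u^a and be a i = d varphi_i / d u^a at (qx,qy),
     with u^0 = q_x, u^1 = q_y *)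
  (forall i, (i < N)%nat ->
     is_derive (fun t => vartheta_q (sx i) (sy i) (sz i) t qy) qx (al 0%nat i) /\
     is_derive (fun t => vartheta_q (sx i) (sy i) (sz i) qx t) qy (al 1%nat i) /\
     is_derive (fun t => varphi_q (sx i) (sy i) t qy) qx (be 0%nat i) /\
     is_derive (fun t => varphi_q (sx i) (sy i) qx t) qy (be 1%nat i)) ->
  (* D holds the derivatives of mu(l) w.r.t. eta at the true parameters *)
  is_mu_derivative (kwave d lam) N Nt Nr L th ph rho x
    (fun i => vartheta_q (sx i) (sy i) (sz i) qx qy)
    (fun i => varphi_q (sx i) (sy i) qx qy) h D ->
  J_q N Nr L sigma2 D al be \in unitmx ->
  (forall a b : 'I_2,
     J_q N Nr L sigma2 D al be a b =
     rsum L (fun l => 2 / sigma2 *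
       rsum N (fun m => rsum N (fun n =>
         Re (Cmult (cis (rho n - rho m))
               (kappa (kwave d lam) Nt Nr th ph
                  (fun i => vartheta_q (sx i) (sy i) (sz i) qx qy)
                  (fun i => varphi_q (sx i) (sy i) qx qy) h x al be
                  a b m n l)))))) /\
  (\tr (invmx (J_q N Nr L sigma2 D al be)))%R =
    (J_q N Nr L sigma2 D al be ord0 ord0 + J_q N Nr L sigma2 D al be ord_max ord_max)
    / (J_q N Nr L sigma2 D al be ord0 ord0 * J_q N Nr L sigma2 D al be ord_max ord_max
       - J_q N Nr L sigma2 D al be ord0 ord_max * J_q N Nr L sigma2 D al be ord_max ord0).
Proof.
move=> _ _ _ _ _ _ HD Hunit; split.
- by move=> a b; rewrite mxE; apply: J_q_entry_kappa.
- exact: mxtrace_invmx2.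
Qed.
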